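(* For fixed $x,z\in\mathbb{R}$, $$\lim_{n\to+\infty}n(2\ln n)^{-1/2}D_n\big((1+z/\ln n)G_n(x)/2\big)=e^{c_0-x-2z},$$ where $G_n(x)=\dfrac{8x-5\ln(2\ln n)}{2n(2\ln n)^{1/2}}+\dfrac{(32\ln n)^{1/2}}{n}$.
   Context: For $\alpha\in(0,\pi)$ let $D_n(\alpha)=\det_{1\le j,l\le n}\left(\frac{1}{2\pi}\int_\alpha^{2\pi-\alpha}e^{i(j-l)\theta}\,d\theta\right)$ (the probability that a Haar unitary $n\times n$ matrix has no eigenvalue on a given arc of length $2\alpha$). By a result of Deift–Its–Krasovsky–Zhou there are constants $c_0\in\mathbb{R}$ and $s_0>0$ such that for every $\varepsilon>0$, uniformly in $s_0/n<\alpha<\pi-\varepsilon$, $$\ln D_n(\alpha)=n^2\ln\cos\frac{\alpha}{2}-\frac14\ln\Big(n\sin\frac{\alpha}{2}\Big)+c_0+O\Big(\frac{1}{n\sin(\alpha/2)}\Big).$$ $c_0$ denotes this constant. *)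

From mathcomp Require Import all_boot all_order all_algebra.
From mathcomp Require Import all_classical all_reals all_analysis.
From mathcomp Require Import complex.
Set Implicit Arguments. Unset Strict Implicit. Unset Printing Implicit Defensive.
Import Order.TTheory GRing.Theory Num.Theory.
Local Open Scope ring_scope.
Local Open Scope complex_scope.

(* (1/2pi) \int_alpha^{2pi-alpha} e^{i k theta} d theta, with k = j - l,
   computed as (1/2pi) (\int cos(k theta) + i \int sin(k theta)) (Lebesgue integrals
   over the interval [alpha, 2pi - alpha]). *)
Definition toep_entry (R : realType) (alpha k : R) : R[i] :=
  ((2 * pi)^-1 * Rintegral (@lebesgue_measure R) `[alpha, 2 * pi - alpha]
                   (fun t => cos (k * t)))
  +i* ((2 * pi)^-1 * Rintegral (@lebesgue_measure R) `[alpha, 2 * pi - alpha]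
                   (fun t => sin (k * t))).

Definition toep_mx (R : realType) (n : nat) (alpha : R) : 'M[R[i]]_n :=
  \matrix_(j < n, l < n) toep_entry alpha ((j : nat)%:R - (l : nat)%:R).

(* D_n(alpha): the determinant (a real number; we take its real part). *)
Definition Dn (R : realType) (n : nat) (alpha : R) : R :=
  complex.Re (\det (toep_mx n alpha)).

(* c0 is "the" constant of Deift--Its--Krasovsky--Zhou: there is s0 > 0 such that
   for every eps > 0 the asymptotic expansion holds with a uniform O-term for
   s0/n < alpha < pi - eps. *)
Definition DIKZ_constant (R : realType) (c0 : R) : Prop :=
  exists2 s0 : R, 0 < s0 &
    forall eps : R, 0 < eps ->
      exists C : R, exists N : nat, forall (n : nat) (alpha : R),
        (0 < n)%N -> (N <= n)%N -> s0 / n%:R < alpha -> alpha < pi - eps ->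
        `| ln (Dn n alpha)
           - (n%:R ^+ 2 * ln (cos (alpha / 2))
              - 4^-1 * ln (n%:R * sin (alpha / 2)) + c0) |
        <= C / (n%:R * sin (alpha / 2)).

Definition Gn (R : realType) (n : nat) (x : R) : R :=
  (8 * x - 5 * ln (2 * ln n%:R)) / (2 * n%:R * Num.sqrt (2 * ln n%:R))
  + Num.sqrt (32 * ln n%:R) / n%:R.

From mathcomp Require Import all_boot all_order all_algebra.
From mathcomp Require Import all_classical all_reals all_analysis.
From mathcomp Require Import ring lra.
Import Order.TTheory GRing.Theory Num.Theory.
Import numFieldNormedType.Exports.
Local Open Scope classical_set_scope.
Local Open Scope ring_scope.

(* Write s_n = (2 ln n)^(1/2) and c_n = x - (5/4) ln s_n.  Unfolding G_n, the arc is
   alpha_n = 2 u_n / n with u_n = (1 + z / ln n) (s_n + c_n / s_n), so u_n ~ s_n -> oo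
   and u_n^2 / n -> 0.  On such arcs the DIKZ error term vanishes, and the Taylor
   expansions n^2 ln cos(alpha_n / 2) = - u_n^2 / 2 + O(u_n^4 / n^2) and
   n sin(alpha_n / 2) = u_n (1 + o(1)) give ln D_n(alpha_n) = c0 - u_n^2 / 2 - (ln u_n) / 4
   + o(1).  Finally u_n^2 / 2 = ln n + c_n + 2z + o(1) and ln u_n = ln s_n + o(1): the
   (5/4) ln s_n coming from c_n and the (ln s_n) / 4 add up to ln s_n, which cancels the
   prefactor n / s_n, so ln (n D_n(alpha_n) / s_n) -> c0 - x - 2z. *)

Section elementary_bounds.
Context {R : realType}.
Implicit Types y t : R.

Lemma ge0_of_derive_ge0 (f df : R -> R) :
  (forall x : R, is_derive x (1 : R) f (df x)) -> f 0 = 0 ->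
  (forall x, 0 <= x -> 0 <= df x) -> forall y, 0 <= y -> 0 <= f y.
Proof.
move=> f_df f0 df_ge0 y; rewrite le_eqVlt => /predU1P[<-|y_gt0]; first by rewrite f0.
have f_cont : {within `[0, y], continuous f}.
  by apply: derivable_within_continuous => t _; exact: ex_derive.
have [c /andP[c_gt0 _] fyE] := MVT y_gt0 (fun t _ => f_df t) f_cont.
move: fyE; rewrite f0 !subr0 => ->; rewrite mulr_ge0 ?(ltW y_gt0)// df_ge0//.
by move: c_gt0; rewrite bnd_simp => /ltW.
Qed.

Lemma sin_le_id y : 0 <= y -> sin y <= y.
Proof.
move=> y_ge0; rewrite -subr_ge0.
apply: (@ge0_of_derive_ge0 (fun y => y - sin y) (fun x => 1 - cos x)) y_ge0.
- by rewrite sin0 subrr.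
- by move=> x _; rewrite subr_ge0 cos_le1.
Qed.

Lemma cos_ge_taylor y : 0 <= y -> 1 - y ^+ 2 / 2 <= cos y.
Proof.
move=> y_ge0; rewrite -subr_ge0.
apply: (@ge0_of_derive_ge0 (fun y => cos y - (1 - y ^+ 2 / 2)) (fun x => x - sin x)) y_ge0.
- by move=> x; apply: is_derive_eq; rewrite /GRing.scale /=; field.
- by rewrite cos0 expr0n /= mul0r subr0 subrr.
- by move=> x x_ge0; rewrite subr_ge0 sin_le_id.
Qed.

Lemma sin_ge_taylor y : 0 <= y -> y - y ^+ 3 / 6 <= sin y.
Proof.
move=> y_ge0; rewrite -subr_ge0.
apply: (@ge0_of_derive_ge0 (fun y => sin y - (y - y ^+ 3 / 6))
  (fun x => cos x - (1 - x ^+ 2 / 2))) y_ge0.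
- by move=> x; apply: is_derive_eq; rewrite /GRing.scale /=; field.
- by rewrite sin0 expr0n /= mul0r subr0 subrr.
- by move=> x x_ge0; rewrite subr_ge0 cos_ge_taylor.
Qed.

Lemma cos_le_taylor y : 0 <= y -> cos y <= 1 - y ^+ 2 / 2 + y ^+ 4 / 24.
Proof.
move=> y_ge0; rewrite -subr_ge0.
apply: (@ge0_of_derive_ge0 (fun y => 1 - y ^+ 2 / 2 + y ^+ 4 / 24 - cos y)
  (fun x => sin x - (x - x ^+ 3 / 6))) y_ge0.
- by move=> x; apply: is_derive_eq; rewrite /GRing.scale /=; field.
- by rewrite cos0 !expr0n /= !mul0r subr0 addr0 subrr.
- by move=> x x_ge0; rewrite subr_ge0 sin_ge_taylor.
Qed.

Lemma ln_ge_1_subV t : 0 < t -> 1 - t^-1 <= ln t.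
Proof.
move=> t_gt0; have tV_gt0 : 0 < t^-1 by rewrite invr_gt0.
have := @le_ln1Dx R (t^-1 - 1); rewrite addrCA subrr addr0 lnV ?posrE//.
by move=> /(_ ltac:(lra)); lra.
Qed.

Lemma ln_cos_taylor y : 0 <= y <= 1 -> `|ln (cos y) + y ^+ 2 / 2| <= y ^+ 4 / 2.
Proof.
move=> /andP[y_ge0 y_le1].
have cos_ge := cos_ge_taylor y y_ge0; have cos_le := cos_le_taylor y y_ge0.
have y2_le1 : y ^+ 2 <= 1 by rewrite expr_le1.
have y4E : y ^+ 4 = y ^+ 2 * y ^+ 2 by rewrite -exprD.
have y2_ge0 : 0 <= y ^+ 2 by exact: sqr_ge0.
have cos_gt0 : 0 < cos y by lra.
have ln_le : ln (cos y) <= cos y - 1.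
  by have := @le_ln1Dx R (cos y - 1); rewrite addrCA subrr addr0; apply; lra.
have ln_ge := ln_ge_1_subV (cos y) cos_gt0.
have cosV_le : (cos y)^-1 <= 1 + y ^+ 2 / 2 + y ^+ 4 / 2.
  rewrite -(ler_pM2r cos_gt0) mulVf ?gt_eqF// y4E.
  have K_ge0 : 0 <= 1 + y ^+ 2 / 2 + y ^+ 2 * y ^+ 2 / 2 by nra.
  nra.
rewrite ler_norml; apply/andP; split; lra.
Qed.

Lemma ln_div_le_sqrt t : 1 <= t -> 0 <= ln t / t <= 2 / Num.sqrt t.
Proof.
move=> t_ge1; have t_gt0 : 0 < t by exact: lt_le_trans t_ge1.
apply/andP; split; first by rewrite divr_ge0 ?ln_ge0// ltW.
have r_gt0 : 0 < Num.sqrt t by rewrite sqrtr_gt0.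
have ln_r := ln_sublinear r_gt0.
rewrite -{1 2}(sqr_sqrtr (ltW t_gt0)) lnXn// ler_pdivrMr ?exprn_gt0//.
by rewrite expr2 mulrA divfK ?gt_eqF// mulr2n; lra.
Qed.

End elementary_bounds.

Section cvg_sequences.
Context {R : realType} {T : Type} {F : set_system T} {FF : Filter F}.
Implicit Types (a b : T -> R) (l : R).

Lemma cvgy_ln [a] : a @ F --> +oo -> (fun n => ln (a n)) @ F --> +oo.
Proof.
move=> a_cvgy; apply/cvgryPge => A; near=> n.
have a_ge : expR A <= a n by near: n; exact: cvgry_ge.
by rewrite -[A]expRK ler_ln ?posrE ?expR_gt0// (lt_le_trans (expR_gt0 A)).
Unshelve. all: end_near.
Qed.

Lemma cvgy_sqrt [a] : a @ F --> +oo -> (fun n => Num.sqrt (a n)) @ F --> +oo.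
Proof.
move=> a_cvgy; apply/cvgryPge => A; near=> n.
have a_ge : A ^+ 2 <= a n by near: n; exact: cvgry_ge.
by rewrite (le_trans (ler_norm A))// -sqrtr_sqr ler_sqrt// (le_trans (sqr_ge0 A)).
Unshelve. all: end_near.
Qed.

Lemma cvgyM_gt0 [a b l] : 0 < l -> a @ F --> +oo -> b @ F --> l ->
  (fun n => a n * b n) @ F --> +oo.
Proof.
move=> l_gt0 a_cvgy b_cvg; apply/cvgryPge => A; near=> n.
have b_ge : l / 2 <= b n by near: n; apply: (cvgr_ge l) => //; lra.
have a_ge : 2 * `|A| / l <= a n by near: n; exact: cvgry_ge.
have a_ge0 : 0 <= a n by apply: le_trans a_ge; rewrite divr_ge0 ?mulr_ge0// ltW.
apply: le_trans (ler_wpM2l a_ge0 b_ge); apply: le_trans (ler_wpM2r _ a_ge).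
  by rewrite (_ : _ * (l / 2) = `|A|) ?ler_norm//; field; rewrite gt_eqF.
by rewrite divr_ge0 ?ltW.
Unshelve. all: end_near.
Qed.

Lemma ln_div_cvg0 [a] : a @ F --> +oo -> (fun n => ln (a n) / a n) @ F --> 0.
Proof.
move=> a_cvgy.
apply: (@squeeze_cvgr _ _ _ _ (fun=> 0) (fun n => 2 / Num.sqrt (a n))).
- by near=> n; apply: ln_div_le_sqrt; near: n; exact: cvgry_ge.
- exact: cvg_cst.
- rewrite -(mulr0 2); apply: cvgMl_tmp; apply/gtr0_cvgV0; last exact: cvgy_sqrt.
  by near=> n; rewrite sqrtr_gt0; near: n; exact: cvgry_gt.
Unshelve. all: end_near.
Qed.

Lemma sin_div_cvg1 [a] : (\forall n \near F, 0 < a n) -> a @ F --> 0 ->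
  (fun n => sin (a n) / a n) @ F --> (1 : R).
Proof.
move=> a_gt0 a_cvg0.
apply: (@squeeze_cvgr _ _ _ _ (fun n => 1 - a n ^+ 2 / 6) (fun=> 1)).
- near=> n; have an_gt0 : 0 < a n by near: n.
  rewrite ler_pdivlMr// ler_pdivrMr// mul1r; apply/andP; split.
    by rewrite mulrBl mul1r mulrAC -exprSr sin_ge_taylor// ltW.
  by rewrite sin_le_id// ltW.
- rewrite -[X in _ --> X](_ : 1 - 0 ^+ 2 / 6 = 1 :> R); last by rewrite expr0n mul0r subr0.
  by apply: cvgB; [exact: cvg_cst | apply: cvgMr_tmp; exact: (cvgM a_cvg0 a_cvg0)].
- exact: cvg_cst.
Unshelve. all: end_near.
Qed.

End cvg_sequences.

Lemma ln_cos_taylor_cvg0 {R : realType} [y : nat -> R] :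
  (\forall n \near \oo, 0 <= y n) -> y @ \oo --> 0 ->
  (fun n => n%:R * y n ^+ 2) @ \oo --> 0 ->
  (fun n => n%:R ^+ 2 * (ln (cos (y n)) + y n ^+ 2 / 2)) @ \oo --> 0.
Proof.
move=> y_ge0 y_cvg0; set v := (fun n => _) => v_cvg0.
apply: (@squeeze_cvgr _ _ _ _ (fun n => - (v n * v n / 2)) (fun n => v n * v n / 2)).
- near=> n; rewrite -ler_norml normrM ger0_norm ?sqr_ge0//.
  have yn_ge0 : 0 <= y n by near: n.
  have yn_le1 : y n <= 1 by near: n; apply: (cvgr_le 0).
  rewrite (_ : v n * v n / 2 = n%:R ^+ 2 * (y n ^+ 4 / 2)); last by rewrite /v; ring.
  by rewrite ler_wpM2l ?sqr_ge0// ln_cos_taylor// yn_ge0.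
- rewrite -oppr0 -[X in - X](mul0r 2^-1) -[X in - (X / 2)](mulr0 0).
  exact: cvgN (cvgMr_tmp (cvgM v_cvg0 v_cvg0)).
- rewrite -[X in _ --> X](mul0r 2^-1) -[X in X / 2](mulr0 0).
  exact: cvgMr_tmp (cvgM v_cvg0 v_cvg0).
Unshelve. all: end_near.
Qed.

Section small_arc.
Context {R : realType} {c0 : R} (c0_DIKZ : DIKZ_constant c0).

Lemma DIKZ_remainder_cvg0 [y : nat -> R] :
  (\forall n \near \oo, 0 < y n) -> y @ \oo --> 0 ->
  (fun n => n%:R * y n) @ \oo --> +oo ->
  (fun n => ln (Dn n (2 * y n))
     - (n%:R ^+ 2 * ln (cos (y n)) - 4^-1 * ln (n%:R * sin (y n)) + c0))
    @ \oo --> 0.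
Proof.
move=> y_gt0 y_cvg0 ny_cvgy.
(* The arcs [2 * y n] tend to 0, so the expansion with [eps = 1] suffices. *)
have [s0 _ /(_ 1 ltr01)[C [N DIKZ]]] := c0_DIKZ.
have sin_y_gt0 : \forall n \near \oo, 0 < sin (y n).
  near=> n; apply: sin_gt0_pi; apply/andP; split; first by near: n.
  by apply: lt_le_trans (pi_ge2 R); near: n; apply: (cvgr_lt 0).
pose bound n := C / (n%:R * sin (y n)).
have bound_cvg0 : bound @ \oo --> 0.
  have ny_inv : (fun n => (n%:R * y n)^-1) @ \oo --> 0.
    by apply/gtr0_cvgV0 => //; near=> n; near: n; exact: cvgry_gt.
  suff lim : (fun n => C * (n%:R * y n)^-1 * (sin (y n) / y n)^-1) @ \oo --> 0.
    apply: cvg_trans _ lim; apply: near_eq_cvg; near=> n.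
    have [n_gt0 yn_gt0 sin_gt0] : [/\ 0 < n%:R :> R, 0 < y n & 0 < sin (y n)].
      by split; near: n; [exact: nbhs_infty_gtr | exact: y_gt0 | exact: sin_y_gt0].
    by rewrite /bound /=; field; rewrite !gt_eqF.
  rewrite -[X in _ --> X](_ : C * 0 * 1^-1 = 0); last by rewrite mulr0 mul0r.
  exact: cvgM (cvgM (cvg_cst C) ny_inv)
    (cvgV (oner_neq0 R) (sin_div_cvg1 y_gt0 y_cvg0)).
apply: (@squeeze_cvgr _ _ _ _ (fun n => - bound n) bound); last exact: bound_cvg0.
- near=> n; rewrite -ler_norml.
  have := DIKZ n (2 * y n); rewrite [2 * y n / 2]mulrC mulKf ?pnatr_eq0//; apply.
  + by near: n; exact: nbhs_infty_gt.
  + by near: n; exact: nbhs_infty_ge.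
  + have ny_gt : s0 / 2 < n%:R * y n by near: n; exact: cvgry_gt.
    have n_gt0 : 0 < n%:R :> R by near: n; exact: nbhs_infty_gtr.
    by rewrite ltr_pdivrMr//; lra.
  + have : y n < 1 / 2 by near: n; apply: (cvgr_lt 0).
    have := pi_ge2 R; lra.
- by rewrite -oppr0; apply: cvgN.
Unshelve. all: end_near.
Qed.

Lemma ln_Dn_half_arc_cvg [y : nat -> R] :
  (\forall n \near \oo, 0 < y n) -> y @ \oo --> 0 ->
  (fun n => n%:R * y n) @ \oo --> +oo -> (fun n => n%:R * y n ^+ 2) @ \oo --> 0 ->
  (fun n => ln (Dn n (2 * y n)) + (n%:R * y n) ^+ 2 / 2 + ln (n%:R * y n) / 4)
    @ \oo --> c0.
Proof.
move=> y_gt0 y_cvg0 ny_cvgy ny2_cvg0.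
have y_ge0 : \forall n \near \oo, 0 <= y n by near=> n; apply: ltW; near: n.
have quartic_cvg0 := ln_cos_taylor_cvg0 y_ge0 y_cvg0 ny2_cvg0.
have rem_cvg0 := DIKZ_remainder_cvg0 y_gt0 y_cvg0 ny_cvgy.
have sinc_ln_cvg0 : (fun n => ln (sin (y n) / y n)) @ \oo --> 0.
  rewrite -[X in _ --> X]ln1; apply: continuous_cvg; first exact: continuous_ln.
  exact: sin_div_cvg1 y_gt0 y_cvg0.
have sinc_gt0 : \forall n \near \oo, 0 < sin (y n) / y n.
  by apply: (cvgr_gt 1); [exact: sin_div_cvg1 y_gt0 y_cvg0 | exact: ltr01].
suff lim : (fun n => ln (Dn n (2 * y n))
    - (n%:R ^+ 2 * ln (cos (y n)) - 4^-1 * ln (n%:R * sin (y n)) + c0)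
    + n%:R ^+ 2 * (ln (cos (y n)) + y n ^+ 2 / 2) - ln (sin (y n) / y n) / 4 + c0)
    @ \oo --> c0.
  apply: cvg_trans _ lim; apply: near_eq_cvg; near=> n.
  have [n_gt0 yn_gt0 sn_gt0] : [/\ 0 < n%:R :> R, 0 < y n & 0 < sin (y n) / y n].
    by split; near: n; [exact: nbhs_infty_gtr | exact: y_gt0 | exact: sinc_gt0].
  have -> : n%:R * sin (y n) = n%:R * y n * (sin (y n) / y n).
    by field; rewrite gt_eqF.
  by rewrite lnM ?posrE ?(mulr_gt0 n_gt0 yn_gt0)//; field.
rewrite -[X in _ --> X](_ : 0 + 0 - 0 / 4 + c0 = c0); last by rewrite mul0r !addr0 subr0 add0r.
exact: cvgD (cvgB (cvgD rem_cvg0 quartic_cvg0) (cvgMr_tmp sinc_ln_cvg0)) (cvg_cst c0).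
Unshelve. all: end_near.
Qed.

Lemma ln_Dn_small_arc_cvg [u : nat -> R] :
  u @ \oo --> +oo -> (fun n => u n ^+ 2 / n%:R) @ \oo --> 0 ->
  (fun n => ln (Dn n (2 * u n / n%:R)) + u n ^+ 2 / 2 + ln (u n) / 4) @ \oo --> c0.
Proof.
move=> u_cvgy v_cvg0; pose y n := u n / n%:R.
have n_gt0 : \forall n \near \oo, 0 < n%:R :> R by exact: nbhs_infty_gtr.
have u_gt0 : \forall n \near \oo, 0 < u n by exact: cvgry_gt.
have nyE n : (0 < n)%N -> n%:R * y n = u n.
  by move=> n_pos; rewrite /y mulrC divfK// gt_eqF// ltr0n.
have y_gt0 : \forall n \near \oo, 0 < y n by near=> n; rewrite divr_gt0//; near: n.
have y_cvg0 : y @ \oo --> 0.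
  have u_inv : (fun n => (u n)^-1) @ \oo --> 0 by apply/gtr0_cvgV0.
  rewrite -[X in _ --> X](mulr0 0); apply: cvg_trans _ (cvgM v_cvg0 u_inv).
  apply: near_eq_cvg; near=> n.
  have [nn_gt0 un_gt0] : 0 < n%:R :> R /\ 0 < u n by split; near: n.
  by rewrite /y /=; field; rewrite !gt_eqF.
have ny_cvgy : (fun n => n%:R * y n) @ \oo --> +oo.
  apply: cvg_trans _ u_cvgy; apply: near_eq_cvg; near=> n.
  by rewrite nyE//; near: n; exact: nbhs_infty_gt.
have ny2_cvg0 : (fun n => n%:R * y n ^+ 2) @ \oo --> 0.
  apply: cvg_trans _ v_cvg0; apply: near_eq_cvg; near=> n.
  have nn_gt0 : 0 < n%:R :> R by near: n.
  by rewrite /y; field; rewrite gt_eqF.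
apply: cvg_trans _ (ln_Dn_half_arc_cvg y_gt0 y_cvg0 ny_cvgy ny2_cvg0).
apply: near_eq_cvg; near=> n.
by rewrite nyE ?mulrA//; near: n; exact: nbhs_infty_gt.
Unshelve. all: end_near.
Qed.

Lemma Dn_small_arc_gt0 [u : nat -> R] :
  u @ \oo --> +oo -> (fun n => u n ^+ 2 / n%:R) @ \oo --> 0 ->
  \forall n \near \oo, 0 < Dn n (2 * u n / n%:R).
Proof.
move=> u_cvgy v_cvg0; have K_cvg := ln_Dn_small_arc_cvg u_cvgy v_cvg0.
(* [ln] vanishes on nonpositive reals, so [Dn <= 0] would let the left-hand side of
   [ln_Dn_small_arc_cvg] grow like [u n ^+ 2 / 2]. *)
near=> n; rewrite ltNge; apply/negP => /ln0 ln_D0.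
have K_lt : ln (Dn n (2 * u n / n%:R)) + u n ^+ 2 / 2 + ln (u n) / 4 < c0 + 1.
  by near: n; apply: (cvgr_lt c0 K_cvg); rewrite ltrDl.
have u_ge : Num.max 1 (2 * c0 + 2) <= u n by near: n; exact: cvgry_ge.
have [u_ge1 u_ge2] : 1 <= u n /\ 2 * c0 + 2 <= u n by move: u_ge; rewrite ge_max => /andP.
have ln_u_ge0 := ln_ge0 u_ge1.
move: K_lt; rewrite ln_D0; nra.
Unshelve. all: end_near.
Qed.

End small_arc.

Section critical_arc.
Context {R : realType} (x z : R).

Let s (n : nat) : R := Num.sqrt (2 * ln n%:R).
Let c (n : nat) : R := x - 5 / 4 * ln (s n).
Let u (n : nat) : R := (1 + z / ln n%:R) * (s n + c n / s n).

Let ln_nat_gt0 n : (1 < n)%N -> 0 < ln (n%:R : R).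
Proof. by move=> n_gt1; rewrite ln_gt0// ltr1n. Qed.

Let s_gt0 n : (1 < n)%N -> 0 < s n.
Proof. by move=> n_gt1; rewrite sqrtr_gt0 mulr_gt0// ln_nat_gt0. Qed.

Let s_sqr n : (0 < n)%N -> s n ^+ 2 = 2 * ln n%:R.
Proof. by move=> n_gt0; rewrite sqr_sqrtr// mulr_ge0// ln_ge0// ler1n. Qed.

Lemma critical_arcE n : (1 < n)%N -> (1 + z / ln n%:R) * Gn n x / 2 = 2 * u n / n%:R.
Proof.
move=> n_gt1; have sn_gt0 := s_gt0 n n_gt1.
have ln_n_gt0 := ln_nat_gt0 n n_gt1.
have n_gt0 : 0 < n%:R :> R by rewrite (lt_trans ltr01)// ltr1n.
have sqrt32E : Num.sqrt (32 * ln n%:R) = 4 * s n.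
  rewrite (_ : 32 * ln n%:R = 4 ^+ 2 * (2 * ln n%:R)); last by ring.
  by rewrite sqrtrM ?sqrtr_sqr ?sqr_ge0// ger0_norm.
have lnlnE : ln (2 * ln n%:R) = 2 * ln (s n).
  by rewrite -s_sqr ?(ltnW n_gt1)// lnXn// mulr_natl.
rewrite /Gn sqrt32E lnlnE -/(s n) /u /c; field.
by rewrite !gt_eqF.
Qed.

Let ln_n_cvgy : (fun n : nat => ln (n%:R : R)) @ \oo --> +oo.
Proof. exact: cvgy_ln (@cvgr_idn R). Qed.

Let s_cvgy : s @ \oo --> +oo.
Proof.
apply: cvgy_sqrt; apply: ger_cvgy ln_n_cvgy; near=> n.
by rewrite ler_pMl ?ler1n// ln_gt0// ltr1n; near: n; exact: nbhs_infty_gt.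
Unshelve. all: end_near.
Qed.

Let inv_s_cvg0 : (fun n => (s n)^-1) @ \oo --> 0.
Proof. by apply/gtr0_cvgV0 => //; exact: cvgry_gt s_cvgy 0. Qed.

Let c_div_s_cvg0 : (fun n => c n / s n) @ \oo --> 0.
Proof.
rewrite -[X in _ --> X](_ : x * 0 - 5 / 4 * 0 = 0); last by rewrite !mulr0 subr0.
apply: cvg_trans _ (cvgB (cvgMl_tmp inv_s_cvg0) (cvgMl_tmp (ln_div_cvg0 s_cvgy))).
by apply: near_eq_cvg; near=> n; rewrite /c !fctE; ring.
Unshelve. all: end_near.
Qed.

Let ln_n_inv_cvg0 : (fun n : nat => (ln (n%:R : R))^-1) @ \oo --> 0.
Proof. by apply/gtr0_cvgV0 => //; exact: cvgry_gt ln_n_cvgy 0. Qed.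

Let u_div_s_cvg1 : (fun n => u n / s n) @ \oo --> (1 : R).
Proof.
rewrite -[X in _ --> X](_ : (1 + z * 0) * (1 + 0 * 0) = 1); last by ring.
have h1 : (fun n : nat => 1 + z * (ln (n%:R : R))^-1) @ \oo --> 1 + z * 0.
  by apply: cvgD; [exact: cvg_cst | exact: cvgMl_tmp ln_n_inv_cvg0].
have h2 : (fun n : nat => 1 + c n / s n * (s n)^-1) @ \oo --> (1 + 0 * 0 : R).
  by apply: cvgD; [exact: cvg_cst | exact: cvgM c_div_s_cvg0 inv_s_cvg0].
apply: cvg_trans _ (cvgM h1 h2).
apply: near_eq_cvg; near=> n; have n_gt1 : (1 < n)%N by near: n; exact: nbhs_infty_gt.
have sn_gt0 := s_gt0 n n_gt1; have ln_n_gt0 := ln_nat_gt0 n n_gt1.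
by rewrite /GRing.mul_fun /u; field; rewrite !gt_eqF.
Unshelve. all: end_near.
Qed.

Lemma u_cvgy : u @ \oo --> +oo.
Proof.
apply: cvg_trans _ (cvgyM_gt0 ltr01 s_cvgy u_div_s_cvg1).
apply: near_eq_cvg; near=> n; have n_gt1 : (1 < n)%N by near: n; exact: nbhs_infty_gt.
have sn_gt0 := s_gt0 n n_gt1.
by rewrite mulrC divfK// gt_eqF.
Unshelve. all: end_near.
Qed.

Lemma u_sqr_div_cvg0 : (fun n => u n ^+ 2 / n%:R) @ \oo --> 0.
Proof.
rewrite -[X in _ --> X](_ : 1 * 1 * (2 * 0) = 0); last by ring.
apply: cvg_trans _ (cvgM (cvgM u_div_s_cvg1 u_div_s_cvg1)
  (cvgMl_tmp (ln_div_cvg0 (@cvgr_idn R)))).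
apply: near_eq_cvg; near=> n; have n_gt1 : (1 < n)%N by near: n; exact: nbhs_infty_gt.
have sn_gt0 := s_gt0 n n_gt1.
have n_gt0 : 0 < n%:R :> R by rewrite (lt_trans ltr01)// ltr1n.
rewrite /GRing.mul_fun [2 * _]mulrA -s_sqr ?(ltnW n_gt1)//; field.
by rewrite !gt_eqF.
Unshelve. all: end_near.
Qed.

Lemma u_sqr_expansion : (fun n => u n ^+ 2 / 2 - ln n%:R - c n - 2 * z) @ \oo --> 0.
Proof.
pose v n := c n / s n; pose w n := (s n)^-1.
have vw_cvg0 : (fun n => v n * w n) @ \oo --> (0 * 0 : R) := cvgM c_div_s_cvg0 inv_s_cvg0.
(* Since ln n = s^2 / 2, the remainder is exactly this polynomial in [v] and [w]. *)
have lim : (fun n => v n * v n / 2 + 2 * z * (v n * w n) * (2 + v n * w n)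
    + 2 * z * z * (w n * w n) * ((1 + v n * w n) * (1 + v n * w n))) @ \oo
    --> 0 * 0 / 2 + 2 * z * (0 * 0) * (2 + 0 * 0)
        + 2 * z * z * (0 * 0) * ((1 + 0 * 0) * (1 + 0 * 0)).
  apply: cvgD; first apply: cvgD.
  - exact: cvgMr_tmp (cvgM c_div_s_cvg0 c_div_s_cvg0).
  - apply: cvgM; first by apply: cvgMl_tmp; exact: vw_cvg0.
    by apply: cvgD; [exact: cvg_cst | exact: vw_cvg0].
  - apply: cvgM; first by apply: cvgMl_tmp; exact: cvgM inv_s_cvg0 inv_s_cvg0.
    by apply: cvgM; apply: cvgD; (exact: cvg_cst || exact: vw_cvg0).
rewrite [X in _ --> X](_ : _ = 0 :> R) in lim; last by ring.
apply: cvg_trans _ lim; apply: near_eq_cvg; near=> n.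
have n_gt1 : (1 < n)%N by near: n; exact: nbhs_infty_gt.
have sn_gt0 := s_gt0 n n_gt1.
rewrite /v /w /u.
have -> : ln (n%:R : R) = s n ^+ 2 / 2 by rewrite s_sqr ?(ltnW n_gt1)//; field.
by field; rewrite gt_eqF.
Unshelve. all: end_near.
Qed.

Let ln_u_sub_ln_s_cvg0 : (fun n => ln (u n) - ln (s n)) @ \oo --> 0.
Proof.
rewrite -[X in _ --> X]ln1.
apply: cvg_trans _ (continuous_cvg _ (continuous_ln ltr01) u_div_s_cvg1).
apply: near_eq_cvg; near=> n.
have [un_gt0 sn_gt0] : 0 < u n /\ 0 < s n.
  by split; near: n; [exact: cvgry_gt u_cvgy 0 | exact: cvgry_gt s_cvgy 0].
by rewrite /= ln_div ?posrE.
Unshelve. all: end_near.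
Qed.

Lemma ln_scaled_Dn_cvg [c0 : R] : DIKZ_constant c0 ->
  (fun n => ln (n%:R : R) - ln (s n) + ln (Dn n (2 * u n / n%:R)))
    @ \oo --> c0 - x - 2 * z.
Proof.
move=> c0_DIKZ.
have K_cvg := ln_Dn_small_arc_cvg c0_DIKZ u_cvgy u_sqr_div_cvg0.
rewrite -[X in _ --> X](_ : c0 - 0 - 0 / 4 - x - 2 * z = _); last by rewrite mul0r !subr0.
apply: cvg_trans _ (cvgB (cvgB (cvgB (cvgB K_cvg u_sqr_expansion)
  (cvgMr_tmp ln_u_sub_ln_s_cvg0)) (cvg_cst x)) (cvg_cst (2 * z))).
by apply: near_eq_cvg; near=> n; rewrite !fctE /c; field.
Unshelve. all: end_near.
Qed.

End critical_arc.

Theorem lemma8 (R : realType) (c0 : R) (hc0 : DIKZ_constant c0) (x z : R) :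
  (fun n : nat =>
     n%:R / Num.sqrt (2 * ln (n%:R : R))
     * Dn n ((1 + z / ln (n%:R : R)) * Gn n x / 2))
    @ \oo --> expR (c0 - x - 2 * z).
Proof.
have D_gt0 := Dn_small_arc_gt0 hc0 (u_cvgy x z) (u_sqr_div_cvg0 x z).
apply: cvg_trans _ (continuous_cvg _ (@continuous_expR R _) (ln_scaled_Dn_cvg x z hc0)).
apply: near_eq_cvg; near=> n; have n_gt1 : (1 < n)%N by near: n; exact: nbhs_infty_gt.
have n_gt0 : 0 < n%:R :> R by rewrite (lt_trans ltr01)// ltr1n.
have s_gt0 : 0 < Num.sqrt (2 * ln (n%:R : R)).
  by rewrite sqrtr_gt0 mulr_gt0// ln_gt0// ltr1n.
rewrite /= critical_arcE// expRD expRB !lnK ?posrE//.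
by near: n; exact: D_gt0.
Unshelve. all: end_near.
Qed.
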